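(* Let $X,Y$ be non-empty subsets of $A^+$, and say that $XY$ is a strong alt-induced code (via $(X,Y)$) when $(X,Y)$ is a strong alternative code. (i) $XY$ is a prefix strong alt-induced code via $(X,Y)$ if and only if $X$ is a prefix code and $Y$ is a bifix code; and $XY$ is a maximal prefix strong alt-induced code via $(X,Y)$ if and only if $X$ is a maximal prefix code and $Y$ is both a maximal prefix code and a bifix code. (ii) $XY$ is a suffix strong alt-induced code via $(X,Y)$ if and only if $X$ is a bifix code and $Y$ is a suffix code; and $XY$ is a maximal suffix strong alt-induced code via $(X,Y)$ if and only if $X$ is both a maximal suffix code and a bifix code and $Y$ is a maximal suffix code. (iii) $XY$ is a bifix (resp. thin maximal bifix) strong alt-induced code via $(X,Y)$ if and only if $X$ and $Y$ are bifix (resp. thin maximal bifix) codes.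
   Context: $A$ is a finite alphabet, $A^*$ the set of words, $A^+$ the non-empty words, $XY=\{xy:x\in X,y\in Y\}$. For $X,Z\subseteq A^*$: $X^{-1}Z=\{u\in A^*: xu\in Z \text{ for some } x\in X\}$, $ZY^{-1}=\{u\in A^*: uy\in Z\text{ for some } y\in Y\}$. A code is a subset of $A^+$ in which every word has at most one factorization into its elements. A prefix (suffix) code is a subset of $A^+$ in which no word is a proper prefix (suffix) of another; a bifix code is both; such a code is maximal if not properly contained in another prefix (suffix, bifix) code over $A$. A set is thin if some word of $A^*$ is not a factor of any of its words. For non-empty $X,Y\subseteq A^+$, $(X,Y)$ is an alternative code if $XY$ is a code and each element of $XY$ has exactly one factorization $xy$ with $x\in X,y\in Y$ (equivalently, no word admits two different similar alternative factorizations on $(X,Y)$). It is a strong alternative code if moreover $X^{-1}(XY)\subseteq Y$ and $(XY)Y^{-1}\subseteq X$. A prefix (maximal prefix, suffix, ...) strong alt-induced code is a strong alt-induced code that is also a prefix (maximal prefix, suffix, ...) code. *)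

From mathcomp Require Import all_boot.
Set Implicit Arguments. Unset Strict Implicit. Unset Printing Implicit Defensive.

Definition lang (A : finType) := seq A -> Prop.

Section Words.
Variable A : finType.

Definition subl (X Y : lang A) : Prop := forall w, X w -> Y w.
Definition nonemptyl (X : lang A) : Prop := exists w, X w.
Definition in_plus (X : lang A) : Prop := forall w, X w -> 0 < size w.

Definition catl (X Y : lang A) : lang A :=
  fun w => exists x y, [/\ X x, Y y & w = x ++ y].
Definition lquot (X Z : lang A) : lang A :=
  fun u => exists x, X x /\ Z (x ++ u).
Definition rquot (Z Y : lang A) : lang A :=
  fun u => exists y, Y y /\ Z (u ++ y).

Definition is_code (C : lang A) : Prop :=
  in_plus C /\
  forall xs ys : seq (seq A),
    (forall x, x \in xs -> C x) -> (forall y, y \in ys -> C y) ->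
    flatten xs = flatten ys -> xs = ys.

Definition prefix_code (C : lang A) : Prop :=
  in_plus C /\ forall u v, C u -> C v -> prefix u v -> u = v.
Definition suffix_code (C : lang A) : Prop :=
  in_plus C /\ forall u v, C u -> C v -> suffix u v -> u = v.
Definition bifix_code (C : lang A) : Prop := prefix_code C /\ suffix_code C.

Definition maximal_prefix_code (C : lang A) : Prop :=
  prefix_code C /\ forall D, prefix_code D -> subl C D -> subl D C.
Definition maximal_suffix_code (C : lang A) : Prop :=
  suffix_code C /\ forall D, suffix_code D -> subl C D -> subl D C.
Definition maximal_bifix_code (C : lang A) : Prop :=
  bifix_code C /\ forall D, bifix_code D -> subl C D -> subl D C.

Definition thin (C : lang A) : Prop :=
  exists w : seq A, forall x, C x -> ~~ infix w x.

Definition alt_code (X Y : lang A) : Prop :=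
  [/\ nonemptyl X, nonemptyl Y, in_plus X, in_plus Y &
      is_code (catl X Y) /\
      forall x y x' y', X x -> Y y -> X x' -> Y y' ->
        x ++ y = x' ++ y' -> x = x' /\ y = y'].

Definition strong_alt_code (X Y : lang A) : Prop :=
  [/\ alt_code X Y, subl (lquot X (catl X Y)) Y & subl (rquot (catl X Y) Y) X].

End Words.

(* If x' = x s with x, x' in X,
   then s y0 lies in X^-1(XY), hence in Y, and x (s y0) = x' y0 are two
   factorizations: so X is a prefix code, and dually Y is a suffix code.
   Conversely, when X is prefix and Y suffix, factorizations over (X, Y) are
   unique and both quotient conditions hold, so every statement reduces to
   properties of X and Y; (ii) is (i) for the mirror images of the languages.
   Maximality descends from XY to X: if X <= D then DY contains XY, so
   d y0 lies in XY and d in (XY)Y^-1 <= X; dually for Y.  A prefix code is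
   maximal iff every word is comparable with one of its words, a property
   stable under products.
   The deep step is that a thin maximal bifix code C is a maximal prefix code
   (Berstel-Perrin).  Let w be a factor of no word of C and u comparable with
   no word of C.  For any v, the set C + {u w v} is still bifix unless w v
   ends with a word of C, so every w v factors as p t with |p| < |w| and t in
   C*.  Since C* u is uniquely decipherable from the left, inserting u at
   position i of a word s of length K, together with |p| for w (s[<i]) = p t,
   determines (i, s).  This maps (K + 1) |A|^K pairs injectively into
   |w| |A|^(K + |u|) ones, which fails for K = |w| |A|^|u|. *)

From Stdlib Require Import Classical FunctionalExtensionality PropExtensionality.
From Stdlib Require Import IndefiniteDescription.
From mathcomp Require Import all_boot zify.

Set Implicit Arguments. Unset Strict Implicit. Unset Printing Implicit Defensive.

Lemma leq_card_rel (T T' : finType) (R : T -> T' -> Prop) :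
  (forall a, exists b, R a b) -> (forall a a' b, R a b -> R a' b -> a = a') ->
  #|T| <= #|T'|.
Proof.
move=> R_total R_inj.
pose f a := proj1_sig (constructive_indefinite_description _ (R_total a)).
have Rf a : R a (f a) by rewrite /f; case: constructive_indefinite_description.
by apply: (@leq_card _ _ f) => a a' fa; apply: (R_inj a a' (f a)); rewrite // fa.
Qed.

Section Codes.
Variable A : finType.
Implicit Types (s t u v w x y z a b c d p q : seq A) (C D X Y : lang A).

Lemma catsI s : injective (cat s).
Proof. by elim: s => //= x s IH a b [] /IH. Qed.

Lemma catIs s : injective (cat^~ s).
Proof.
move=> a b E; have /eqP := congr1 size E; rewrite !size_cat eqn_add2r => /eqP ab.
by move/eqP: E; rewrite eqseq_cat // => /andP[/eqP].
Qed.

Lemma prefix_comparable a b s : prefix a s -> prefix b s -> prefix a b \/ prefix b a.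
Proof.
rewrite ![prefix _ s]prefixE => /eqP as_a /eqP bs_b.
case: (leqP (size a) (size b)) => ab; [left | right].
  by rewrite prefixE -bs_b take_takel // as_a.
by rewrite prefixE -as_a take_takel ?bs_b // ltnW.
Qed.

Lemma suffix_comparable a b s : suffix a s -> suffix b s -> suffix a b \/ suffix b a.
Proof. by rewrite -!prefix_rev; apply: prefix_comparable. Qed.

Lemma cat_prefix_comparable a b c d : a ++ b = c ++ d -> prefix a c \/ prefix c a.
Proof.
by move=> E; apply: (@prefix_comparable _ _ (a ++ b)); rewrite ?prefix_prefix // E prefix_prefix.
Qed.

Lemma cat_suffix_comparable a b c d : a ++ b = c ++ d -> suffix b d \/ suffix d b.
Proof.
by move=> E; apply: (@suffix_comparable _ _ (a ++ b)); rewrite ?suffix_suffix // E suffix_suffix.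
Qed.

Lemma cat_prefix_size a b c d : a ++ b = c ++ d -> size a <= size c -> prefix a c.
Proof.
case/cat_prefix_comparable => // ca ac.
have size_ca : size c = size a by apply/eqP; rewrite eqn_leq size_prefix.
by move: ca; rewrite prefixE size_ca take_size => /eqP->; exact: prefix_refl.
Qed.

Lemma prefix_code_cat_eq C a b s t :
  prefix_code C -> C a -> C b -> a ++ s = b ++ t -> a = b.
Proof.
move=> [_ PC] Ca Cb /cat_prefix_comparable[ab | ba]; first exact: PC.
exact/esym/PC.
Qed.

Lemma suffix_code_cat_eq C a b s t :
  suffix_code C -> C a -> C b -> s ++ a = t ++ b -> a = b.
Proof.
move=> [_ SC] Ca Cb /cat_suffix_comparable[ab | ba]; first exact: SC.
exact/esym/SC.
Qed.

Lemma prefix_code_is_code C : prefix_code C -> is_code C.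
Proof.
move=> PC; split=> [|xs]; first exact: PC.1.
elim: xs => [|x xs IH] [|y ys] Cxs Cys //=.
- move=> /(congr1 size); rewrite size_cat.
  by have := PC.1 y (Cys y (mem_head _ _)); case: (size y).
- move=> /(congr1 size); rewrite size_cat.
  by have := PC.1 x (Cxs x (mem_head _ _)); case: (size x).
move=> E; have xy := prefix_code_cat_eq PC (Cxs x (mem_head _ _)) (Cys y (mem_head _ _)) E.
rewrite -xy in E *; congr (_ :: _); apply: IH (catsI E) => z zs.
  by apply: Cxs; rewrite inE zs orbT.
by apply: Cys; rewrite inE zs orbT.
Qed.

Lemma subl_refl C : subl C C.
Proof. by []. Qed.

Lemma subl_catl X X' Y Y' : subl X X' -> subl Y Y' -> subl (catl X Y) (catl X' Y').
Proof. by move=> XX' YY' _ [x [y [Xx Yy ->]]]; exists x, y; split; [apply: XX' | apply: YY' |]. Qed.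

Lemma in_plus_catl X Y : in_plus X -> in_plus (catl X Y).
Proof. by move=> PlX _ [x [y [/PlX x_gt0 _ ->]]]; rewrite size_cat addn_gt0 x_gt0. Qed.

Lemma catl_prefix_code X Y : prefix_code X -> prefix_code Y -> prefix_code (catl X Y).
Proof.
move=> PX [_ PY]; split; first exact: in_plus_catl PX.1.
move=> _ _ [x [y [Xx Yy ->]]] [x' [y' [Xx' Yy' ->]]] /[dup] /catl_prefix.
case/prefixP=> s E; have xx' := prefix_code_cat_eq PX Xx Xx' (esym E).
by rewrite -xx' prefix_catr // eqxx => /(PY _ _ Yy Yy')->.
Qed.

Lemma prefix_code_catl_right X Y :
  nonemptyl X -> in_plus Y -> prefix_code (catl X Y) -> prefix_code Y.
Proof.
move=> [x0 Xx0] PlY [_ PXY]; split=> // y y' Yy Yy' yy'.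
apply: (@catsI x0); apply: PXY; [by exists x0, y | by exists x0, y' |].
by rewrite prefix_catr // eqxx.
Qed.

Lemma strong_alt_prefix_code X Y : strong_alt_code X Y -> prefix_code X.
Proof.
move=> [[_ [y0 Yy0] PlX _ [_ uniq_fact]] quotX _]; split=> // x x' Xx Xx' /prefixP[s x'_def].
have Ysy0 : Y (s ++ y0).
  by apply: quotX; exists x; split=> //; exists x', y0; split; rewrite // x'_def catA.
by case: (uniq_fact _ _ _ _ Xx Ysy0 Xx' Yy0); rewrite // x'_def catA.
Qed.

Lemma strong_alt_suffix_code X Y : strong_alt_code X Y -> suffix_code Y.
Proof.
move=> [[[x0 Xx0] _ _ PlY [_ uniq_fact]] _ quotY]; split=> // y y' Yy Yy' /suffixP[s y'_def].
have Xx0s : X (x0 ++ s).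
  by apply: quotY; exists y; split=> //; exists x0, y'; split; rewrite // y'_def catA.
case: (uniq_fact _ _ _ _ Xx0s Yy Xx0 Yy'); first by rewrite y'_def catA.
by rewrite -{2}[x0]cats0 => /catsI s0; rewrite y'_def s0.
Qed.

Lemma strong_alt_code_of_prefix_suffix X Y :
  nonemptyl X -> nonemptyl Y -> prefix_code X -> suffix_code Y ->
  is_code (catl X Y) -> strong_alt_code X Y.
Proof.
move=> NX NY PX SY CXY; split.
- split=> //; [exact: PX.1 | exact: SY.1 |]; split=> // x y x' y' Xx Yy Xx' Yy' E.
  have xx' := prefix_code_cat_eq PX Xx Xx' E.
  by split=> //; apply: (@catsI x); rewrite E xx'.
- move=> s [x [Xx [x' [y' [Xx' Yy' E]]]]].
  have xx' := prefix_code_cat_eq PX Xx Xx' E.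
  by move: E; rewrite xx' => /catsI->.
- move=> s [y [Yy [x' [y' [Xx' Yy' E]]]]].
  have yy' := suffix_code_cat_eq SY Yy Yy' E.
  by move: E; rewrite yy' => /catIs->.
Qed.

Definition revl C : lang A := fun w => C (rev w).

Lemma revlK : involutive revl.
Proof. by move=> C; apply: functional_extensionality => w; rewrite /revl revK. Qed.

Lemma revl_catl X Y : revl (catl X Y) = catl (revl Y) (revl X).
Proof.
apply: functional_extensionality => w; apply: propositional_extensionality; split.
  by move=> [x [y [Xx Yy E]]]; exists (rev y), (rev x); rewrite /revl !revK -rev_cat -E revK.
by move=> [y [x [Yy Xx ->]]]; exists (rev x), (rev y); rewrite rev_cat.
Qed.

Lemma nonemptyl_revl C : nonemptyl C -> nonemptyl (revl C).
Proof. by move=> [w Cw]; exists (rev w); rewrite /revl revK. Qed.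

Lemma in_plus_revl C : in_plus C -> in_plus (revl C).
Proof. by move=> PlC w /PlC; rewrite size_rev. Qed.

Lemma subl_revl C D : subl C D -> subl (revl C) (revl D).
Proof. by move=> CD w /CD. Qed.

Lemma is_code_revl C : is_code C -> is_code (revl C).
Proof.
move=> [PlC uniq_fact]; split=> [|xs ys Cxs Cys E]; first exact: in_plus_revl.
have revC zs : (forall z, z \in zs -> revl C z) -> forall z, z \in rev (map rev zs) -> C z.
  by move=> Czs z; rewrite mem_rev => /mapP[z' /Czs ? ->].
have := uniq_fact _ _ (revC _ Cxs) (revC _ Cys); rewrite -!rev_flatten E => /(_ erefl).
by move/(congr1 (map rev \o rev)); rewrite /= !revK -!map_comp !(eq_map (@revK _)) !map_id.
Qed.

Lemma revl_transfer (P Q : lang A -> Prop) :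
  (forall C, P C -> Q (revl C)) -> (forall C, Q C -> P (revl C)) ->
  forall C, P (revl C) = Q C.
Proof.
move=> PQ QP C; apply: propositional_extensionality; split; last exact: QP.
by move/PQ; rewrite revlK.
Qed.

Lemma prefix_code_revl C : prefix_code (revl C) = suffix_code C.
Proof.
apply: revl_transfer => {}C [PlC PC]; split=> [|u v Cu Cv]; try exact: in_plus_revl.
  by rewrite -prefix_rev => /(PC _ _ Cu Cv) /(congr1 rev); rewrite !revK.
by rewrite -suffix_rev => /(PC _ _ Cu Cv) /(congr1 rev); rewrite !revK.
Qed.

Lemma suffix_code_revl C : suffix_code (revl C) = prefix_code C.
Proof. by rewrite -[in RHS](revlK C) prefix_code_revl. Qed.

Lemma bifix_code_revl C : bifix_code (revl C) = bifix_code C.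
Proof.
rewrite /bifix_code prefix_code_revl suffix_code_revl.
by apply: propositional_extensionality; apply: and_comm.
Qed.

Definition maximal (P : lang A -> Prop) C := P C /\ forall D, P D -> subl C D -> subl D C.

Lemma maximal_revl (P Q : lang A -> Prop) :
  (forall C, P (revl C) = Q C) -> forall C, maximal P (revl C) = maximal Q C.
Proof.
move=> PQ C; apply: propositional_extensionality; rewrite /maximal PQ.
split=> -[QC maxC]; split=> // D QD CD.
  have PD : P (revl D) by rewrite PQ.
  by have := subl_revl (maxC _ PD (subl_revl CD)); rewrite !revlK.
have QD' : Q (revl D) by rewrite -PQ revlK.
have CD' : subl C (revl D) by rewrite -[C]revlK; apply: subl_revl.
by have := subl_revl (maxC _ QD' CD'); rewrite revlK.
Qed.

Lemma maximal_prefix_code_revl C : maximal_prefix_code (revl C) = maximal_suffix_code C.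
Proof. exact: maximal_revl prefix_code_revl C. Qed.

Lemma strong_alt_code_revl_of X Y : strong_alt_code X Y -> strong_alt_code (revl Y) (revl X).
Proof.
move=> [[NX NY PlX PlY [CXY uniq_fact]] quotX quotY]; split; first split.
- exact: nonemptyl_revl.
- exact: nonemptyl_revl.
- exact: in_plus_revl.
- exact: in_plus_revl.
- split; first by rewrite -revl_catl; apply: is_code_revl.
  move=> y x y' x' Yy Xx Yy' Xx' E.
  have [] := uniq_fact _ _ _ _ Xx Yy Xx' Yy'; first by rewrite -!rev_cat E.
  by move=> /(congr1 rev) + /(congr1 rev); rewrite !revK.
- rewrite -revl_catl => s [y [Yy XYys]]; apply: quotY; exists (rev y); split=> //.
  by move: XYys; rewrite /revl rev_cat.
- rewrite -revl_catl => s [x [Xx XYsx]]; apply: quotX; exists (rev x); split=> //.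
  by move: XYsx; rewrite /revl rev_cat.
Qed.

Lemma strong_alt_code_revl X Y : strong_alt_code (revl Y) (revl X) = strong_alt_code X Y.
Proof.
apply: propositional_extensionality; split; last exact: strong_alt_code_revl_of.
by move/strong_alt_code_revl_of; rewrite !revlK.
Qed.

Lemma catl_suffix_code X Y : suffix_code X -> suffix_code Y -> suffix_code (catl X Y).
Proof.
move=> SX SY; rewrite -prefix_code_revl revl_catl.
by apply: catl_prefix_code; rewrite prefix_code_revl.
Qed.

Lemma catl_bifix_code X Y : bifix_code X -> bifix_code Y -> bifix_code (catl X Y).
Proof. by move=> [PX SX] [PY SY]; split; [apply: catl_prefix_code | apply: catl_suffix_code]. Qed.

Lemma strong_alt_maximal_left (P : lang A -> Prop) X Y :
  strong_alt_code X Y -> (forall D, P D -> P (catl D Y)) ->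
  maximal P (catl X Y) -> P X -> maximal P X.
Proof.
move=> [[_ [y0 Yy0] _ _ _] _ quotY] P_catl [_ maxXY] PX; split=> // D PD XD d Dd.
apply: quotY; exists y0; split=> //.
by apply: maxXY (P_catl _ PD) (subl_catl XD (@subl_refl Y)) _ _; exists d, y0.
Qed.

Lemma strong_alt_maximal_right (P : lang A -> Prop) X Y :
  strong_alt_code X Y -> (forall D, P D -> P (catl X D)) ->
  maximal P (catl X Y) -> P Y -> maximal P Y.
Proof.
move=> [[[x0 Xx0] _ _ _ _] quotX _] P_catl [_ maxXY] PY; split=> // D PD YD d Dd.
apply: quotX; exists x0; split=> //.
by apply: maxXY (P_catl _ PD) (subl_catl (@subl_refl X) YD) _ _; exists x0, d.
Qed.

Lemma maximal_prefix_bifix_code C :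
  bifix_code C -> maximal_prefix_code C -> maximal_bifix_code C.
Proof. by move=> BC [_ maxC]; split=> // D [PD _]; apply: maxC. Qed.

Definition addl C z : lang A := fun s => C s \/ s = z.

Lemma maximal_addl (P : lang A -> Prop) C z : maximal P C -> P (addl C z) -> C z.
Proof. by move=> [_ maxC] /maxC; apply=> [s|]; [left | right]. Qed.

Lemma prefix_code_addl C z :
  prefix_code C -> 0 < size z -> (forall x, C x -> ~ (prefix x z \/ prefix z x)) ->
  prefix_code (addl C z).
Proof.
move=> [PlC PC] z_gt0 z_inc; split=> [s [/PlC | ->] // | p q [Cp | ->] [Cq | ->] pq //].
- exact: PC.
- by case: (z_inc _ Cp); left.
- by case: (z_inc _ Cq); right.
Qed.

Lemma suffix_code_addl C z :
  suffix_code C -> 0 < size z -> (forall x, C x -> ~ (suffix x z \/ suffix z x)) ->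
  suffix_code (addl C z).
Proof.
move=> [PlC SC] z_gt0 z_inc; split=> [s [/PlC | ->] // | p q [Cp | ->] [Cq | ->] pq //].
- exact: SC.
- by case: (z_inc _ Cp); left.
- by case: (z_inc _ Cq); right.
Qed.

Definition right_complete C := forall u, exists2 x, C x & prefix x u \/ prefix u x.

Lemma maximal_prefix_code_right_complete C :
  nonemptyl C -> maximal_prefix_code C -> right_complete C.
Proof.
move=> [x0 Cx0] maxC u; apply: NNPP => u_inc.
pose z := u ++ x0.
have z_inc x : C x -> ~ (prefix x z \/ prefix z x).
  move=> Cx [xz | zx]; apply: u_inc; exists x => //.
    exact: prefix_comparable xz (prefix_prefix u x0).
  by right; apply: prefix_trans (prefix_prefix u x0) zx.
have Cz : C z.
  apply: (maximal_addl maxC); apply: prefix_code_addl z_inc; first exact: maxC.1.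
  by rewrite size_cat addn_gt0 (maxC.1.1 _ Cx0) orbT.
by apply: (z_inc _ Cz); left; apply: prefix_refl.
Qed.

Lemma right_complete_maximal_prefix_code C :
  prefix_code C -> right_complete C -> maximal_prefix_code C.
Proof.
move=> PC rcC; split=> // D [_ PD] CD d Dd.
have [x Cx [xd | dx]] := rcC d; first by rewrite -(PD _ _ (CD _ Cx) Dd xd).
by rewrite (PD _ _ Dd (CD _ Cx) dx).
Qed.

Lemma catl_right_complete X Y :
  nonemptyl Y -> right_complete X -> right_complete Y -> right_complete (catl X Y).
Proof.
move=> [y0 Yy0] rcX rcY u; have [x Xx [/prefixP[s ->] | ux]] := rcX u.
  have [y Yy ys] := rcY s; exists (x ++ y); first by exists x, y.
  by rewrite !prefix_catr // eqxx.
by exists (x ++ y0); [exists x, y0 | right; apply: prefix_catl].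
Qed.

Lemma thin_catl_left X Y : nonemptyl Y -> thin (catl X Y) -> thin X.
Proof.
move=> [y0 Yy0] [w XY_avoids_w]; exists w => x Xx.
have XYxy0 : catl X Y (x ++ y0) by exists x, y0.
by apply: contra (XY_avoids_w _ XYxy0); apply: infix_catr.
Qed.

Lemma thin_catl_right X Y : nonemptyl X -> thin (catl X Y) -> thin Y.
Proof.
move=> [x0 Xx0] [w XY_avoids_w]; exists w => y Yy.
have XYx0y : catl X Y (x0 ++ y) by exists x0, y.
by apply: contra (XY_avoids_w _ XYx0y); apply: infix_catl.
Qed.

Lemma thin_catl X Y : thin X -> thin Y -> thin (catl X Y).
Proof.
move=> [w1 X_avoids_w1] [w2 Y_avoids_w2]; exists (w1 ++ w2) => _ [x [y [Xx Yy ->]]].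
apply/negP => /infixP[a [b E]].
have {}E : x ++ y = (a ++ w1) ++ (w2 ++ b) by rewrite E -!catA.
case: (cat_prefix_comparable E) => /prefixP[r r_def].
  have y_def : y = r ++ w2 ++ b by apply: (@catsI x); rewrite E r_def -!catA.
  by case/negP: (Y_avoids_w2 _ Yy); rewrite y_def infix_infix.
by case/negP: (X_avoids_w1 _ Xx); rewrite r_def -catA infix_infix.
Qed.

Definition star C : lang A :=
  fun t => exists2 xs : seq (seq A), {in xs, forall x, C x} & t = flatten xs.

Lemma star0 C : star C [::].
Proof. by exists [::]. Qed.

Lemma star_rcat C t x : star C t -> C x -> star C (t ++ x).
Proof.
move=> [xs Cxs ->] Cx; exists (xs ++ [:: x]); last by rewrite flatten_cat /= cats0.
by move=> y; rewrite mem_cat inE => /orP[/Cxs | /eqP->].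
Qed.

Section ThinMaximalBifix.
Variable C : lang A.
Hypothesis C_max : maximal_bifix_code C.
Variable w : seq A.
Hypothesis w_gt0 : 0 < size w.
Hypothesis C_avoids_w : forall x, C x -> ~~ infix w x.
Variable u : seq A.
Hypothesis u_incomparable : forall x, C x -> ~ (prefix x u \/ prefix u x).

Let PC : prefix_code C := C_max.1.1.

Lemma w_cat_code_suffix v : exists q x, C x /\ w ++ v = q ++ x.
Proof.
apply: NNPP => no_suffix.
pose z := u ++ w ++ v.
have z_nfactor x : C x -> ~~ infix z x.
  by move=> Cx; apply: contra (C_avoids_w Cx); apply: infix_trans; apply: infix_infix.
have z_gt0 : 0 < size z by rewrite !size_cat; lia.
have Cz : C z.
  apply: (maximal_addl C_max); split.
    apply: prefix_code_addl PC z_gt0 _ => x Cx [xz | zx].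
      by apply: (u_incomparable Cx); apply: prefix_comparable xz (prefix_prefix u (w ++ v)).
    by case/negP: (z_nfactor _ Cx); apply: prefixW.
  apply: suffix_code_addl C_max.1.2 z_gt0 _ => x Cx [xz | zx]; last first.
    by case/negP: (z_nfactor _ Cx); apply: suffixW.
  case: (suffix_comparable xz (suffix_suffix u (w ++ v))) => [/suffixP[q wv] | wvx].
    by apply: no_suffix; exists q, x.
  by case/negP: (C_avoids_w Cx); apply: infix_trans (prefix_infix w v) (suffixW wvx).
by case/negP: (z_nfactor _ Cz); apply: infix_refl.
Qed.

Lemma w_cat_factor v : exists p t, [/\ size p < size w, star C t & w ++ v = p ++ t].
Proof.
have [n] := ubnP (size v); elim: n v => // n IH v v_lt.
have [q [x [Cx wv]]] := w_cat_code_suffix v.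
case: (ltnP (size q) (size w)) => [q_lt | w_le_q].
  by exists q, x; split=> //; rewrite -[x]cat0s; apply: star_rcat (star0 C) Cx.
have [v' q_def] : exists v' : seq A, q = w ++ v'.
  by apply/prefixP; apply: cat_prefix_size wv w_le_q.
have v_def : v = v' ++ x by apply: (@catsI w); rewrite wv q_def catA.
have v'_lt : size v' < n by move: v_lt; rewrite v_def size_cat; have := PC.1 _ Cx; lia.
have [p [t [p_lt Ct wv']]] := IH v' v'_lt.
by exists p, (t ++ x); split=> //; [apply: star_rcat | rewrite v_def catA wv' catA].
Qed.

Lemma star_cat_u_inj t t' y y' :
  star C t -> star C t' -> t ++ u ++ y = t' ++ u ++ y' -> t = t'.
Proof.
case=> xs Cxs -> [xs' Cxs' ->].
elim: xs xs' Cxs Cxs' => [|x xs IH] [|x' xs'] //= Cxs Cxs'.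
- rewrite -catA => /cat_prefix_comparable ux'.
  by case: (u_incomparable (Cxs' x' (mem_head _ _))); case: ux'; [right | left].
- rewrite -catA => /cat_prefix_comparable xu.
  by case: (u_incomparable (Cxs x (mem_head _ _))).
rewrite -!catA => E.
have xx' := prefix_code_cat_eq PC (Cxs x (mem_head _ _)) (Cxs' x' (mem_head _ _)) E.
rewrite -xx' in E *; congr (_ ++ _); apply: IH (catsI E) => z zs.
  by apply: Cxs; rewrite inE zs orbT.
by apply: Cxs'; rewrite inE zs orbT.
Qed.

Lemma insert_u_inj p p' t t' s1 s1' s2 s2' :
  star C t -> star C t' -> size p = size p' ->
  w ++ s1 = p ++ t -> w ++ s1' = p' ++ t' ->
  s1 ++ u ++ s2 = s1' ++ u ++ s2' -> s1 = s1' /\ s2 = s2'.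
Proof.
move=> Ct Ct' pp' ws1 ws1' E.
have /eqP : p ++ t ++ u ++ s2 = p' ++ t' ++ u ++ s2'.
  by rewrite catA -ws1 -catA E catA ws1' -catA.
rewrite eqseq_cat // => /andP[/eqP pp /eqP /(star_cat_u_inj Ct Ct') tt].
have s1s1' : s1 = s1' by apply: (@catsI w); rewrite ws1 ws1' pp tt.
by split=> //; move: E; rewrite s1s1' => /catsI/catsI.
Qed.

Lemma card_insert_u K :
  #|{: 'I_K.+1 * K.-tuple A}| <= #|{: 'I_(size w) * (K + size u).-tuple A}|.
Proof.
have take_size (i : 'I_K.+1) (s : K.-tuple A) : size (take i s) = i.
  by rewrite size_takel // size_tuple -ltnS.
pose R (d : 'I_K.+1 * K.-tuple A) (c : 'I_(size w) * (K + size u).-tuple A) :=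
  val c.2 = take d.1 d.2 ++ u ++ drop d.1 d.2 /\
  exists p t, [/\ size p = c.1, star C t & w ++ take d.1 d.2 = p ++ t].
apply: (@leq_card_rel _ _ R) => [[i s] | [i s] [i' s'] [j z]].
  have [p [t [p_lt Ct ws]]] := w_cat_factor (take i s).
  have z_size : size (take i s ++ u ++ drop i s) == K + size u.
    by rewrite !size_cat take_size size_drop size_tuple addnCA subnKC 1?addnC // -ltnS.
  by exists (Ordinal p_lt, Tuple z_size); split=> //; exists p, t.
move=> [/= z_def [p [t [pj Ct ws]]]] [/= z_def' [p' [t' [pj' Ct' ws']]]].
have [take_ss' drop_ss'] := insert_u_inj Ct Ct' (etrans pj (esym pj')) ws ws'
  (etrans (esym z_def) z_def').
have ii' : i = i'.
  apply: val_inj; rewrite /= -[LHS](take_size i s) -[RHS](take_size i' s').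
  by rewrite take_ss'.
have ss' : s = s'.
  by apply: val_inj; rewrite /= -(cat_take_drop i s) take_ss' drop_ss' cat_take_drop.
by rewrite ii' ss'.
Qed.

Lemma thin_maximal_bifix_absurd : False.
Proof.
have A_gt0 : 0 < #|A| by case: w w_gt0 => // a _ _; apply/card_gt0P; exists a.
have := card_insert_u (size w * #|A| ^ size u).
rewrite !card_prod !card_ord !card_tuple expnD.
have : 0 < #|A| ^ (size w * #|A| ^ size u) by rewrite expn_gt0 A_gt0.
move: (#|A| ^ (size w * #|A| ^ size u)) (#|A| ^ size u) => a b; nia.
Qed.

End ThinMaximalBifix.

Lemma thin_maximal_bifix_right_complete C :
  nonemptyl C -> thin C -> maximal_bifix_code C -> right_complete C.
Proof.
move=> [x0 Cx0] [w C_avoids_w] C_max u; apply: NNPP => u_inc.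
have w_gt0 : 0 < size w by case: w C_avoids_w => // /(_ x0 Cx0); rewrite infix0s.
apply: (thin_maximal_bifix_absurd C_max w_gt0 C_avoids_w (u := u)) => x Cx xu.
by apply: u_inc; exists x.
Qed.

Lemma thin_maximal_bifix_maximal_prefix_code C :
  nonemptyl C -> thin C -> maximal_bifix_code C -> maximal_prefix_code C.
Proof.
move=> NC TC maxC; apply: right_complete_maximal_prefix_code; first exact: maxC.1.1.
exact: thin_maximal_bifix_right_complete.
Qed.

Section PrefixStrongAltInduced.
Variables X Y : lang A.
Hypotheses (NX : nonemptyl X) (NY : nonemptyl Y).

Lemma prefix_strong_alt_codeP :
  (strong_alt_code X Y /\ prefix_code (catl X Y)) <-> (prefix_code X /\ bifix_code Y).
Proof.
split=> [[altXY PXY] | [PX [PY SY]]].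
  have [[_ _ _ PlY _] _ _] := altXY.
  split; first exact: strong_alt_prefix_code altXY.
  by split; [apply: prefix_code_catl_right PXY | apply: strong_alt_suffix_code altXY].
have PXY := catl_prefix_code PX PY; split=> //.
by apply: strong_alt_code_of_prefix_suffix => //; apply: prefix_code_is_code.
Qed.

Lemma maximal_prefix_strong_alt_codeP :
  (strong_alt_code X Y /\ maximal_prefix_code (catl X Y)) <->
  [/\ maximal_prefix_code X, maximal_prefix_code Y & bifix_code Y].
Proof.
split=> [[altXY maxXY] | [maxX maxY BY]].
  have [PX BY] := proj1 prefix_strong_alt_codeP (conj altXY maxXY.1).
  split=> //.
    apply: (strong_alt_maximal_left (P := @prefix_code A) altXY _ maxXY PX) => D PD.
    exact: catl_prefix_code PD BY.1.
  apply: (strong_alt_maximal_right (P := @prefix_code A) altXY _ maxXY BY.1) => D PD.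
  exact: catl_prefix_code PX PD.
have [altXY PXY] := proj2 prefix_strong_alt_codeP (conj maxX.1 BY).
split=> //; apply: right_complete_maximal_prefix_code PXY _.
by apply: catl_right_complete NY _ _; apply: maximal_prefix_code_right_complete.
Qed.

End PrefixStrongAltInduced.

Section SuffixBifixStrongAltInduced.
Variables X Y : lang A.
Hypotheses (NX : nonemptyl X) (NY : nonemptyl Y).

Lemma suffix_strong_alt_codeP :
  (strong_alt_code X Y /\ suffix_code (catl X Y)) <-> (bifix_code X /\ suffix_code Y).
Proof.
have := prefix_strong_alt_codeP (nonemptyl_revl NY) (nonemptyl_revl NX).
rewrite -revl_catl strong_alt_code_revl !prefix_code_revl bifix_code_revl => ->.
by split=> -[].
Qed.

Lemma maximal_suffix_strong_alt_codeP :
  (strong_alt_code X Y /\ maximal_suffix_code (catl X Y)) <->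
  [/\ maximal_suffix_code X, bifix_code X & maximal_suffix_code Y].
Proof.
have := maximal_prefix_strong_alt_codeP (nonemptyl_revl NY) (nonemptyl_revl NX).
rewrite -revl_catl strong_alt_code_revl !maximal_prefix_code_revl bifix_code_revl => ->.
by split=> -[*]; split.
Qed.

Lemma bifix_strong_alt_codeP :
  (strong_alt_code X Y /\ bifix_code (catl X Y)) <-> (bifix_code X /\ bifix_code Y).
Proof.
split=> [[altXY [PXY SXY]] | [BX BY]].
  have [_ BY] := proj1 (prefix_strong_alt_codeP NX NY) (conj altXY PXY).
  by have [BX _] := proj1 suffix_strong_alt_codeP (conj altXY SXY).
have [altXY PXY] := proj2 (prefix_strong_alt_codeP NX NY) (conj BX.1 BY).
by have [_ SXY] := proj2 suffix_strong_alt_codeP (conj BX BY.2).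
Qed.

Lemma thin_maximal_bifix_strong_alt_codeP :
  (strong_alt_code X Y /\ (thin (catl X Y) /\ maximal_bifix_code (catl X Y))) <->
  ((thin X /\ maximal_bifix_code X) /\ (thin Y /\ maximal_bifix_code Y)).
Proof.
split=> [[altXY [TXY maxXY]] | [[TX maxX] [TY maxY]]].
  have [BX BY] := proj1 bifix_strong_alt_codeP (conj altXY maxXY.1).
  split; split.
  - exact: thin_catl_left TXY.
  - apply: (strong_alt_maximal_left (P := @bifix_code A) altXY _ maxXY BX) => D BD.
    exact: catl_bifix_code BD BY.
  - exact: thin_catl_right TXY.
  - apply: (strong_alt_maximal_right (P := @bifix_code A) altXY _ maxXY BY) => D BD.
    exact: catl_bifix_code BX BD.
have [altXY BXY] := proj2 bifix_strong_alt_codeP (conj maxX.1 maxY.1).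
have maxPX := thin_maximal_bifix_maximal_prefix_code NX TX maxX.
have maxPY := thin_maximal_bifix_maximal_prefix_code NY TY maxY.
have [_ maxPXY] := proj2 (maximal_prefix_strong_alt_codeP NX NY) (And3 maxPX maxPY maxY.1).
by split=> //; split; [exact: thin_catl | exact: maximal_prefix_bifix_code BXY maxPXY].
Qed.

End SuffixBifixStrongAltInduced.

End Codes.

Theorem theoremT (A : finType) (X Y : lang A) :
  nonemptyl X -> nonemptyl Y -> in_plus X -> in_plus Y ->
  (* (i) *)
  ((strong_alt_code X Y /\ prefix_code (catl X Y)) <->
     (prefix_code X /\ bifix_code Y)) /\
  ((strong_alt_code X Y /\ maximal_prefix_code (catl X Y)) <->
     [/\ maximal_prefix_code X, maximal_prefix_code Y & bifix_code Y]) /\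
  (* (ii) *)
  ((strong_alt_code X Y /\ suffix_code (catl X Y)) <->
     (bifix_code X /\ suffix_code Y)) /\
  ((strong_alt_code X Y /\ maximal_suffix_code (catl X Y)) <->
     [/\ maximal_suffix_code X, bifix_code X & maximal_suffix_code Y]) /\
  (* (iii) *)
  ((strong_alt_code X Y /\ bifix_code (catl X Y)) <->
     (bifix_code X /\ bifix_code Y)) /\
  ((strong_alt_code X Y /\ (thin (catl X Y) /\ maximal_bifix_code (catl X Y))) <->
     ((thin X /\ maximal_bifix_code X) /\ (thin Y /\ maximal_bifix_code Y))).
Proof.
move=> NX NY _ _.
split; first exact: prefix_strong_alt_codeP.
split; first exact: maximal_prefix_strong_alt_codeP.
split; first exact: suffix_strong_alt_codeP.
split; first exact: maximal_suffix_strong_alt_codeP.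
split; first exact: bifix_strong_alt_codeP.
exact: thin_maximal_bifix_strong_alt_codeP.
Qed.
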